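(* Let $G=(g_{ij})$ be a Hermitian $4\times4$ matrix with $g_{ii}=0$, $g_{12}=g_{23}=g_{34}=1$, $|g_{13}|=1$, $g_{14}\ne0$, $g_{24}\ne0$ and $\det G=0$. If $\mathrm{Re}(g_{13})\le0$ and $\mathrm{Re}(g_{24}\overline{g}_{14})\le0$, then $\mathrm{Re}(g_{13}\overline{g}_{14})\le0$ and $\mathrm{Re}(\overline{g}_{24})\le0$. *)

From mathcomp Require Import all_boot all_order all_algebra.
From mathcomp Require Export complex.
From mathcomp Require Export reals.
Set Implicit Arguments. Unset Strict Implicit. Unset Printing Implicit Defensive.
Import Order.TTheory GRing.Theory Num.Theory.
Local Open Scope ring_scope.

Definition hermitian_mx (R : realType) n (G : 'M[R[i]]_n) : Prop :=
  forall i j, G j i = conjc (G i j).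

From mathcomp Require Import all_boot all_order all_algebra.
From mathcomp Require Import complex reals.
From mathcomp Require Import ring.
Import Order.TTheory GRing.Theory Num.Theory.
Local Open Scope ring_scope.

(* With |a| = 1, where a = g13, b = g14, c = g24, the determinant factors as
   det G = |d|^2 - 4 Re(a) Re(a conj b)  with  d = c - a - conj(a) b.
   Hence det G = 0 and Re a <= 0 force Re(a conj b) <= 0, except when Re a = 0;
   then d = 0, so c = a + conj(a) b and Re(c conj b) = Re(a conj b) settles it.
   Finally Re c = Re a + Re(a conj b) + Re d, and
   Re d <= |d| = 2 sqrt(Re a Re(a conj b)) <= -(Re a + Re(a conj b)) by AM-GM. *)

(* a', b', c' stand for the conjugates of a, b, c. *)
Definition path4_mx {R : pzRingType} (a a' b b' c c' : R) : 'M[R]_4 :=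
  \matrix_(i, j)
    match nat_of_ord i, nat_of_ord j with
    | 0, 1 | 1, 0 | 1, 2 | 2, 1 | 2, 3 | 3, 2 => 1
    | 0, 2 => a | 2, 0 => a' | 0, 3 => b | 3, 0 => b' | 1, 3 => c | 3, 1 => c'
    | _, _ => 0
    end.

Lemma det_path4_mx (R : comNzRingType) (a a' b b' c c' : R) : a * a' = 1 ->
  \det (path4_mx a a' b b' c c')
    = (c - a - a' * b) * (c' - a' - a * b') - (a + a') * (a * b' + a' * b).
Proof.
move=> aa'1.
rewrite (expand_det_row _ ord0) !big_ord_recl big_ord0 /cofactor.
rewrite !(expand_det_row _ ord0) !big_ord_recl !big_ord0 /cofactor.
rewrite !(expand_det_row _ ord0) !big_ord_recl !big_ord0 /cofactor.
rewrite !det_mx11 !mxE /= /bump /=.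
transitivity ((c - a - a' * b) * (c' - a' - a * b') - (a + a') * (a * b' + a' * b)
   + (1 - a * a') * (1 + b * b' - b - b' - c * c')); first ring.
by rewrite aa'1 subrr mul0r addr0.
Qed.

Lemma sqr_le_4mul_le_oppD (R : numDomainType) (p x e : R) :
  p <= 0 -> x <= 0 -> 0 <= e -> e ^+ 2 <= 4 * p * x -> e <= - (p + x).
Proof.
move=> p_le0 x_le0 e_ge0 e2_le.
have px_real : p - x \is Num.real by rewrite realB ?ler0_real.
have amgm : 4 * p * x <= (- (p + x)) ^+ 2.
  rewrite -subr_ge0 (_ : _ - _ = (p - x) ^+ 2); last by ring.
  exact: real_exprn_even_ge0.
have pxN_ge0 : 0 <= - (p + x) by rewrite opprD addr_ge0 ?oppr_ge0.
rewrite -(ler_pXn2r (_ : 0 < 2)%N) ?nnegrE //.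
exact: le_trans amgm.
Qed.

Section HermitianPath4.
Context {C : numClosedFieldType}.
Implicit Types a b c : C.

Lemma det_path4_mx_conj a b c : `|a| = 1 ->
  \det (path4_mx a a^* b b^* c c^*)
    = `|c - a - a^* * b| ^+ 2 - 4 * 'Re a * 'Re (a * b^*).
Proof.
move=> a_unit.
rewrite det_path4_mx -?normCK ?a_unit ?expr1n // normCK !ReE.
rewrite !rmorphB !rmorphM /= !conjCK.
by field.
Qed.

Lemma Re_conjC_mul a b : 'Re (a^* * b) = 'Re (a * b^*).
Proof. by rewrite -Re_conj rmorphM /= conjCK. Qed.

Section DetZero.
Context {a b c d : C}.
Hypothesis c_def : c = d + (a + a^* * b).
Hypothesis det_eq0 : `|d| ^+ 2 = 4 * 'Re a * 'Re (a * b^*).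
Hypothesis Re_a_le0 : 'Re a <= 0.

Lemma Re_mul_conj_le0 : 'Re (c * b^*) <= 0 -> 'Re (a * b^*) <= 0.
Proof.
move=> Re_cb_le0.
have [Re_a0|Re_a_neq0] := eqVneq ('Re a) 0.
  have d0 : d = 0.
    by apply/eqP; rewrite -normr_eq0 -sqrf_eq0 det_eq0 Re_a0 mulr0 mul0r.
  have b2_real : `|b| ^+ 2 \is Num.real by rewrite realX ?normr_real.
  move: Re_cb_le0; rewrite c_def d0 add0r mulrDl -mulrA -normCK raddfD /=.
  by rewrite (ReMr b2_real) Re_conj Re_a0 mul0r addr0.
have Re_a_lt0 : 'Re a < 0 by rewrite lt_neqAle Re_a_neq0.
have : 0 <= `|d| ^+ 2 := exprn_ge0 2 (normr_ge0 d).
by rewrite det_eq0 nmulr_rge0 // pmulr_rlt0.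
Qed.

Lemma Re_le0 : 'Re (a * b^*) <= 0 -> 'Re c <= 0.
Proof.
move=> Re_ab_le0.
have norm_d_le : `|d| <= - ('Re a + 'Re (a * b^*)).
  by apply: sqr_le_4mul_le_oppD; rewrite ?det_eq0.
rewrite c_def !raddfD /= Re_conjC_mul -[_ + 'Re (a * b^*)]opprK lerBlDr add0r.
exact: le_trans (leif_Re_Creal d).1 norm_d_le.
Qed.

End DetZero.
End HermitianPath4.

Lemma Ordinal_inord n k (lt_kn : (k < n.+1)%N) : Ordinal lt_kn = inord k :> 'I_n.+1.
Proof. by apply/val_inj; rewrite /= inordK. Qed.

Theorem corollary3p1 (R : realType) (G : 'M[R[i]]_4) :
  hermitian_mx G ->
  (forall k : 'I_4, G k k = 0) ->
  G (inord 0) (inord 1) = 1 ->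
  G (inord 1) (inord 2) = 1 ->
  G (inord 2) (inord 3) = 1 ->
  `|G (inord 0) (inord 2)| = 1 ->
  G (inord 0) (inord 3) != 0 ->
  G (inord 1) (inord 3) != 0 ->
  \det G = 0 ->
  Re (G (inord 0) (inord 2)) <= 0 ->
  Re (G (inord 1) (inord 3) * conjc (G (inord 0) (inord 3))) <= 0 ->
  Re (G (inord 0) (inord 2) * conjc (G (inord 0) (inord 3))) <= 0 /\
  Re (conjc (G (inord 1) (inord 3))) <= 0.
Proof.
move=> hermG diagG g12 g23 g34 a_unit _ _ detG0 Re_a_le0 Re_cb_le0.
set a := G (inord 0) (inord 2) in a_unit Re_a_le0 *.
set b := G (inord 0) (inord 3) in Re_cb_le0 *.
set c := G (inord 1) (inord 3) in Re_cb_le0 *.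
have G_def : G = path4_mx a a^* b b^* c c^*.
  apply/matrixP => i j; rewrite mxE.
  case: i => [[|[|[|[|k]]]] Hi] //; case: j => [[|[|[|[|l]]]] Hj] //;
  rewrite ?diagG //= !Ordinal_inord ?g12 ?g23 ?g34 //;
  rewrite hermG ?g12 ?g23 ?g34 ?conjc1 //.
have det_eq : `|c - a - a^* * b| ^+ 2 = 4 * 'Re a * 'Re (a * b^*).
  by apply/eqP; rewrite -subr_eq0 -det_path4_mx_conj // -G_def detG0.
have c_def : c = (c - a - a^* * b) + (a + a^* * b) by ring.
have Re_ab_le0 := Re_mul_conj_le0 c_def det_eq Re_a_le0 Re_cb_le0.
split=> //.
by rewrite (Re_conj c); apply: Re_le0 c_def det_eq Re_a_le0 Re_ab_le0.
Qed.
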